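(* Let $V$ be an $R$-module and $A=\Gamma_R(V)$ the free $DP$ algebra on $V$. Then the indecomposable quotient of $A$ is $A/A^2\cong U(0)\otimes_R V$, where $A^2$ is the $R$-submodule spanned by products $ab$, $a,b\in A$.
   Context: Fix a commutative unital ring $R$. An ''algebra'' means a commutative, not necessarily unital, $R$-algebra. A $DP$ algebra is an algebra $A$ with maps $\gamma_n:A\to A$ ($n\ge1$) such that for all $a,b\in A$, $r\in R$, $m,n\ge1$: $\gamma_1(a)=a$; $\gamma_n(a+b)=\gamma_n(a)+\sum_{i+j=n,\,i,j\ge1}\gamma_i(a)\gamma_j(b)+\gamma_n(b)$; $\gamma_n(ab)=a^n\gamma_n(b)$; $\gamma_n(rb)=r^n\gamma_n(b)$; $\gamma_m(a)\gamma_n(a)=\frac{(m+n)!}{m!\,n!}\gamma_{m+n}(a)$; $\gamma_m(\gamma_n(a))=\frac{(mn)!}{m!(n!)^m}\gamma_{mn}(a)$. $\Gamma_R(V)$ is the free $DP$ algebra on $V$. $U(0)$ is the unital ring generated by $R$ and symbols $\phi_p$ ($p$ prime), commuting with one another, subject to $p\phi_p=0$ and $\phi_pr=r^p\phi_p$ ($r\in R$); $U(0)\otimes_R V$ uses the right $R$-module structure of $U(0)$ and is a left $U(0)$-module. The isomorphism is one of abelian $DP$ algebras (left $U(0)$-modules), $\phi_p$ acting on $A/A^2$ via $\gamma_p$. *)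

From HB Require Import structures.
From mathcomp Require Import all_boot all_order all_algebra.
Set Implicit Arguments. Unset Strict Implicit. Unset Printing Implicit Defensive.
Import GRing.Theory.
Local Open Scope ring_scope.

Definition is_Rlin (R : comPzRingType) (U W : lmodType R) (f : U -> W) : Prop :=
  (forall x y, f (x + y) = f x + f y) /\ (forall (r : R) x, f (r *: x) = r *: f x).

(* Positive powers in a non-unital algebra: npow mul a n = a^n for n >= 1. *)
Definition npow (A : Type) (mul : A -> A -> A) (a : A) (n : nat) : A :=
  iter n.-1 (mul a) a.

(* A DP algebra: commutative, not necessarily unital R-algebra with maps
   gamma_n (n >= 1; gamma 0 is unconstrained junk and never used). *)
Record dpalg (R : comPzRingType) := DPAlg {
  dp_car :> lmodType R;
  dp_mul : dp_car -> dp_car -> dp_car;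
  dp_gamma : nat -> dp_car -> dp_car;
  dp_mulA : forall a b c, dp_mul a (dp_mul b c) = dp_mul (dp_mul a b) c;
  dp_mulC : forall a b, dp_mul a b = dp_mul b a;
  dp_mulDl : forall a b c, dp_mul (a + b) c = dp_mul a c + dp_mul b c;
  dp_mulZl : forall (r : R) a b, dp_mul (r *: a) b = r *: dp_mul a b;
  dp_gamma1 : forall a, dp_gamma 1 a = a;
  dp_gammaD : forall n a b, (1 <= n)%N ->
    dp_gamma n (a + b) = dp_gamma n a
      + \sum_(1 <= i < n) dp_mul (dp_gamma i a) (dp_gamma (n - i) b)
      + dp_gamma n b;
  dp_gammaM : forall n a b, (1 <= n)%N ->
    dp_gamma n (dp_mul a b) = dp_mul (npow dp_mul a n) (dp_gamma n b);
  dp_gammaZ : forall n (r : R) b, (1 <= n)%N ->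
    dp_gamma n (r *: b) = r ^+ n *: dp_gamma n b;
  dp_gamma_mul : forall m n a, (1 <= m)%N -> (1 <= n)%N ->
    dp_mul (dp_gamma m a) (dp_gamma n a)
      = dp_gamma (m + n) a *+ ((m + n)`! %/ (m`! * n`!));
  dp_gamma_comp : forall m n a, (1 <= m)%N -> (1 <= n)%N ->
    dp_gamma m (dp_gamma n a)
      = dp_gamma (m * n) a *+ ((m * n)`! %/ (m`! * (n`! ^ m)))
}.

Arguments dp_gamma {R} d n _.
Arguments dp_mul {R d} _ _.
Definition is_dp_morph (R : comPzRingType) (A B : dpalg R) (h : A -> B) : Prop :=
  is_Rlin h /\
  (forall a b, h (dp_mul a b) = dp_mul (h a) (h b)) /\
  (forall n a, (1 <= n)%N -> h (dp_gamma A n a) = dp_gamma B n (h a)).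

(* (A, i) is the free DP algebra Gamma_R(V) on V (universal property). *)
Definition is_free_dp (R : comPzRingType) (V : lmodType R) (A : dpalg R)
    (i : V -> A) : Prop :=
  is_Rlin i /\
  forall (B : dpalg R) (g : V -> B), is_Rlin g ->
    (exists h : A -> B, is_dp_morph h /\ forall v, h (i v) = g v) /\
    (forall h1 h2 : A -> B, is_dp_morph h1 -> is_dp_morph h2 ->
       (forall v, h1 (i v) = g v) -> (forall v, h2 (i v) = g v) ->
       forall a, h1 a = h2 a).

Definition in_sq (R : comPzRingType) (A : dpalg R) (a : A) : Prop :=
  exists s : seq (R * A * A), a = \sum_(x <- s) (x.1.1 *: dp_mul x.1.2 x.2).

(* A left U(0)-module, U(0) being presented by generators R and phi_p
   (p prime) and relations p phi_p = 0, phi_p r = r^p phi_p, phi_p phi_q =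
   phi_q phi_p: an R-module with additive maps phi_p satisfying these. *)
Record u0mod (R : comPzRingType) := U0Mod {
  u0_car :> lmodType R;
  u0_phi : nat -> u0_car -> u0_car;
  u0_phiD : forall p x y, prime p -> u0_phi p (x + y) = u0_phi p x + u0_phi p y;
  u0_phiZ : forall p (r : R) x, prime p -> u0_phi p (r *: x) = r ^+ p *: u0_phi p x;
  u0_phi_char : forall p x, prime p -> u0_phi p x *+ p = 0;
  u0_phiC : forall p q x, prime p -> prime q ->
    u0_phi p (u0_phi q x) = u0_phi q (u0_phi p x)
}.

Arguments u0_phi {R} u p _.

Definition is_u0_lin (R : comPzRingType) (M N : u0mod R) (h : M -> N) : Prop :=
  is_Rlin h /\ forall p x, prime p -> h (u0_phi M p x) = u0_phi N p (h x).

(* (M, j) is U(0) (x)_R V with j v = 1 (x) v (extension of scalars,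
   universal property). *)
Definition is_u0_tensor (R : comPzRingType) (V : lmodType R) (M : u0mod R)
    (j : V -> M) : Prop :=
  is_Rlin j /\
  forall (N : u0mod R) (g : V -> N), is_Rlin g ->
    (exists h : M -> N, is_u0_lin h /\ forall v, h (j v) = g v) /\
    (forall h1 h2 : M -> N, is_u0_lin h1 -> is_u0_lin h2 ->
       (forall v, h1 (j v) = g v) -> (forall v, h2 (j v) = g v) ->
       forall m, h1 m = h2 m).

(* In a DP algebra with zero multiplication the relations
   gamma_m gamma_n = C(m + n, m) gamma_(m + n) = 0 make gamma_n vanish unless n
   is a prime power, and make gamma_p additive and p-torsion; the composition
   rule, whose coefficient (p ^ k.+1)! / (p! (p ^ k)! ^ p) is 1 mod p, gives
   gamma_(p ^ k) = gamma_p ^ k. So square-zero DP algebras are exactly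
   U(0)-modules, with gamma_(p ^ k) = phi_p ^ k. Now A / A^2 is square-zero and
   any DP morphism from A to a square-zero DP algebra kills A^2. Hence, for a
   U(0)-module N, U(0)-linear maps A / A^2 -> N, DP morphisms A -> N and
   R-linear maps V -> N correspond, so A / A^2 and U(0) (x)_R V have the same
   universal property and are isomorphic. *)
From HB Require Import structures.
From mathcomp Require Import all_boot all_order all_algebra.
From mathcomp Require Import ring generic_quotient ring_quotient.
From Stdlib Require Import ClassicalEpsilon.
Import GRing.Theory.
Local Open Scope ring_scope.
Set Implicit Arguments. Unset Strict Implicit. Unset Printing Implicit Defensive.

Lemma eqmod_Fp p m n : prime p -> (m = n %[mod p])%N <-> (m%:R = n%:R :> 'F_p).
Proof.
move=> pp; split=> [Emod|/(congr1 val)]; last by rewrite /= !val_Fp_nat.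
by rewrite -(Fp_nat_mod pp m) Emod Fp_nat_mod.
Qed.

Lemma mulrn_eqmod (Z : zmodType) (x : Z) p m n :
  x *+ p = 0 -> (m = n %[mod p])%N -> x *+ m = x *+ n.
Proof.
move=> xp; suff xmod k : x *+ k = x *+ (k %% p) by move=> e; rewrite xmod e -xmod.
by rewrite {1}(divn_eq k p) mulrnDr mulnC mulrnA xp mul0rn add0r.
Qed.

Lemma mulrn_gcd_eq0 (Z : zmodType) (x : Z) a b :
  x *+ a = 0 -> x *+ b = 0 -> x *+ gcdn a b = 0.
Proof.
move=> xa xb; have [->|a0] := posnP a; first by rewrite gcd0n.
have [u v Ebez _] := egcdnP b a0.
have := congr1 (fun k => x *+ k) Ebez.
by rewrite /= !mulrnDr [(u * a)%N]mulnC [(v * b)%N]mulnC !mulrnA xa xb !mul0rn add0r.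
Qed.

Lemma dvdn_bin_pfactor p j n k :
  prime p -> (p ^ j %| n)%N -> (0 < k < p ^ j)%N -> (p %| 'C(n, k))%N.
Proof.
move=> pp pjn /andP[k0 kpj]; apply/negPn/negP => npC.
have : (p ^ j %| k * 'C(n, k))%N.
  by rewrite -[k]prednK // -mul_bin_diag dvdn_mulr.
rewrite Gauss_dvdl ?coprimeXl ?prime_coprime // => /(dvdn_leq k0).
by rewrite leqNgt kpj.
Qed.

Lemma bin_pfactor_pred_mod p j t : prime p -> (0 < t)%N ->
  ('C(t * p ^ j - 1, p ^ j - 1) = 1 %[mod p])%N.
Proof.
move=> pp t0; have pj0 : (0 < p ^ j)%N by rewrite expn_gt0 prime_gt0.
have n0 : (0 < t * p ^ j)%N by rewrite muln_gt0 t0.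
(* Pascal's rule with p | 'C(t * p ^ j, k.+1) gives the signs (-1) ^ k. *)
have alt k : (k < p ^ j)%N -> 'C(t * p ^ j - 1, k)%:R = (-1) ^+ k :> 'F_p.
  elim: k => [|k IH] kpj; first by rewrite bin0.
  have := binS (t * p ^ j - 1) k; rewrite subn1 prednK // -subn1 => Ebin.
  have /eqmod_Fp : 'C(t * p ^ j, k.+1) = 0 %[mod p].
    by rewrite mod0n; apply/eqP/(dvdn_bin_pfactor pp (dvdn_mull _ (dvdnn _))).
  move=> /(_ pp); rewrite Ebin natrD IH ?(ltnW kpj) // => /eqP.
  by rewrite addr_eq0 exprS mulN1r => /eqP.
apply/eqmod_Fp => //; rewrite alt ?subn1 ?prednK //.
have [p2|p2] := eqVneq p 2%N.
  suff ->: -1 = 1 :> 'F_p by rewrite expr1n.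
  by apply/eqP; rewrite eq_sym -addr_eq0 -mulr2n -p2 pchar_Fp_0.
have oddp : odd p by case: (even_prime pp) p2 => ->.
by rewrite -signr_odd -subn1 oddB ?oddX ?oddp ?orbT.
Qed.

Lemma bin_mul_pred N t : (0 < N)%N ->
  'C(t * N, N) = (t * 'C(t * N - 1, N - 1))%N.
Proof.
move=> N0; case: t => [|t]; first by rewrite mul0n bin0n gtn_eqF.
have := mul_bin_diag (t.+1 * N) N.-1; rewrite prednK // !subn1 => Ediag.
by apply/eqP; rewrite -(eqn_pmul2l N0) -Ediag mulnA [(N * _)%N]mulnC.
Qed.

Lemma bin_pfactor_mod p j t : prime p -> ('C(t * p ^ j, p ^ j) = t %[mod p])%N.
Proof.
move=> pp; have [->|t0] := posnP t; first by rewrite mul0n bin0n gtn_eqF ?expn_gt0 ?prime_gt0.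
by rewrite bin_mul_pred ?expn_gt0 ?prime_gt0 // -modnMmr bin_pfactor_pred_mod // modnMmr muln1.
Qed.

Lemma fact_comp_coef N t : (0 < N)%N ->
  ((t * N)`! %/ (t`! * N`! ^ t) = \prod_(1 <= s < t.+1) 'C(s * N - 1, N - 1))%N.
Proof.
move=> N0; suff <- : ((\prod_(1 <= s < t.+1) 'C(s * N - 1, N - 1)) * (t`! * N`! ^ t)
    = (t * N)`!)%N by rewrite mulnK // muln_gt0 fact_gt0 expn_gt0 fact_gt0.
elim: t => [|t IH]; first by rewrite big_geq.
rewrite big_nat_recr //= factS expnS.
have := bin_fact (leq_addl (t * N) N); rewrite addnK -mulSnr => <-.
rewrite bin_mul_pred // -IH; ring.
Qed.

Lemma comp_coef_pfactor_mod p j t : prime p ->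
  ((t * p ^ j)`! %/ (t`! * (p ^ j)`! ^ t) = 1 %[mod p])%N.
Proof.
move=> pp; rewrite fact_comp_coef ?expn_gt0 ?prime_gt0 //; apply/eqmod_Fp => //.
rewrite natr_prod big_nat_cond big1 // => s /andP[/andP[s0 _] _].
exact: (eqmod_Fp _ _ pp).1 (bin_pfactor_pred_mod j pp s0).
Qed.

Lemma bin_addn_factd m n : 'C(m + n, m) = ((m + n)`! %/ (m`! * n`!))%N.
Proof.
by rewrite -(bin_fact (leq_addr n m)) addKn mulnK // muln_gt0 !fact_gt0.
Qed.

(* Includes [n = 1 = p ^ 0]. *)
Definition prime_power (n : nat) : bool := n == (pdiv n ^ logn (pdiv n) n)%N.

Lemma prime_power_pfactor p k : prime p -> prime_power (p ^ k)%N.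
Proof.
move=> pp; case: k => [|k]; first by [].
by rewrite /prime_power pdiv_pfactor // pfactorK.
Qed.

Lemma prime_powerP n : reflect (exists p k, prime p /\ n = p ^ k)%N (prime_power n).
Proof.
apply: (iffP idP) => [ppn|[p [k [pp ->]]]]; last exact: prime_power_pfactor.
have [-> | n1] := eqVneq n 1%N; first by exists 2%N, 0%N.
exists (pdiv n), (logn (pdiv n) n); split; last exact/eqP.
apply: pdiv_prime; rewrite ltn_neqAle eq_sym n1 lt0n; apply: contraTneq ppn => ->.
by rewrite /prime_power.
Qed.

Lemma prime_power_dvd d n : (d %| n)%N -> prime_power n -> prime_power d.
Proof.
move=> dn /prime_powerP[p [k [pp En]]]; rewrite En in dn.
by case/(dvdn_pfactor _ _ pp): dn => l _ ->; apply: prime_power_pfactor.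
Qed.

Lemma prime_power_dvd_eq p q n : prime_power n -> prime p -> prime q ->
  (p %| n)%N -> (q %| n)%N -> p = q.
Proof.
case/prime_powerP=> r [k [pr ->]] pp pq.
by rewrite !Euclid_dvdX // !dvdn_prime2 // => /andP[/eqP-> _] /andP[/eqP-> _].
Qed.

(* A prime r dividing all 'C(n, i) divides 'C(n, r ^ v) = n %/ r ^ v (mod r),
   where r ^ v is the exact power of r in n. *)
Lemma gcd_bin_non_prime_power n : (0 < n)%N -> ~~ prime_power n ->
  (\big[gcdn/0]_(i < n | 0 < i) 'C(n, i))%N = 1%N.
Proof.
move=> n0 npp; set D := (\big[gcdn/0]_(i < n | 0 < i) _)%N.
have Ddvd m : (0 < m < n)%N -> (D %| 'C(n, m))%N.
  by case/andP=> m0 mn; apply: (@biggcdn_inf _ (Ordinal mn)).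
have n1 : (1 < n)%N by case: n n0 npp {D Ddvd} => [|[|n]].
have Dn : (D %| n)%N by rewrite -(bin1 n) Ddvd.
have D0 : (0 < D)%N by apply: contraTltn Dn; rewrite leqn0 => /eqP->; rewrite dvd0n -lt0n.
apply/eqP; rewrite eqn_leq D0 andbT leqNgt; apply/negP => D1.
have pr : prime (pdiv D) by apply: pdiv_prime.
have [t cop_t En] := pfactor_coprime pr n0; set N := (_ ^ _)%N in En.
have t1 : (1 < t)%N.
  case: t En cop_t => [|[|t]] // En; first by rewrite En in n0.
  by move: npp; rewrite En mul1n prime_power_pfactor.
have /Ddvd : (0 < N < n)%N.
  by rewrite expn_gt0 prime_gt0 //= En -{1}[N]mul1n ltn_mul2r t1 expn_gt0 prime_gt0.
move/(dvdn_trans (pdiv_dvd D)); rewrite /dvdn En bin_pfactor_mod // -/(dvdn _ t).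
by rewrite -(negbK (_ %| t)%N) -prime_coprime ?cop_t.
Qed.

Lemma Rlin0 (R : comPzRingType) (U W : lmodType R) (f : U -> W) : is_Rlin f -> f 0 = 0.
Proof. by case=> _ fZ; rewrite -(scale0r (0 : U)) fZ scale0r. Qed.

Lemma RlinB (R : comPzRingType) (U W : lmodType R) (f : U -> W) x y :
  is_Rlin f -> f (x - y) = f x - f y.
Proof. by case=> fD fZ; rewrite -scaleN1r fD fZ scaleN1r. Qed.

Lemma dp_gamma0 (R : comPzRingType) (A : dpalg R) n : (0 < n)%N -> dp_gamma A n 0 = 0.
Proof. by move=> n0; rewrite -(scale0r (0 : A)) dp_gammaZ // expr0n gtn_eqF // !scale0r. Qed.

Section SquareZeroConstruction.
Variables (R : comPzRingType) (V : lmodType R) (gamma : nat -> V -> V).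
Hypothesis gamma1 : forall x, gamma 1 x = x.
Hypothesis gammaD : forall n x y, (1 <= n)%N -> gamma n (x + y) = gamma n x + gamma n y.
Hypothesis gammaZ : forall n (r : R) x, (1 <= n)%N -> gamma n (r *: x) = r ^+ n *: gamma n x.
Hypothesis gamma_mul : forall m n x, (1 <= m)%N -> (1 <= n)%N ->
  0 = gamma (m + n) x *+ ((m + n)`! %/ (m`! * n`!)).
Hypothesis gamma_comp : forall m n x, (1 <= m)%N -> (1 <= n)%N ->
  gamma m (gamma n x) = gamma (m * n) x *+ ((m * n)`! %/ (m`! * n`! ^ m)).

Definition sqzero_dpalg : dpalg R.
Proof.
refine (@DPAlg R V (fun _ _ => 0) gamma _ _ _ _ gamma1 _ _ gammaZ gamma_mul gamma_comp).
- by [].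
- by [].
- by move=> *; rewrite addr0.
- by move=> *; rewrite scaler0.
- by move=> n x y n0; rewrite big1_eq addr0 gammaD.
- by move=> n x y n0; rewrite -(scale0r 0) gammaZ // expr0n gtn_eqF // !scale0r.
Defined.

End SquareZeroConstruction.

Section U0DPAlgebra.
Variables (R : comPzRingType) (M : u0mod R).
Local Notation phi := (u0_phi M).

Lemma iter_phiD p k : prime p -> {morph iter k (phi p) : x y / x + y}.
Proof. by move=> pp x y; elim: k => //= k ->; rewrite u0_phiD. Qed.

Lemma iter_phi0 p k : prime p -> iter k (phi p) 0 = 0.
Proof. by move=> pp; apply: (addrI (iter k (phi p) 0)); rewrite -iter_phiD ?addr0. Qed.

Lemma iter_phiZ p k (r : R) x : prime p ->
  iter k (phi p) (r *: x) = r ^+ (p ^ k) *: iter k (phi p) x.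
Proof.
move=> pp; elim: k => [|k IH] /=; first by rewrite expr1.
by rewrite IH u0_phiZ // -exprM expnSr.
Qed.

Lemma iter_phi_char p k x : prime p -> (0 < k)%N -> iter k (phi p) x *+ p = 0.
Proof. by move=> pp; case: k => // k _; rewrite iterS u0_phi_char. Qed.

Lemma iter_phiMn p k n x : prime p -> iter k (phi p) (x *+ n) = iter k (phi p) x *+ n.
Proof. by move=> pp; elim: n => [|n IH]; rewrite ?iter_phi0 // !mulrS iter_phiD // IH. Qed.

Lemma iter_phi_mixed p q i j x : prime p -> prime q -> p != q -> (0 < i)%N -> (0 < j)%N ->
  iter i (phi p) (iter j (phi q) x) = 0.
Proof.
move=> pp pq neq i0 j0; have cop : coprime p q by rewrite prime_coprime // dvdn_prime2.
rewrite -[LHS]mulr1n -(eqP cop); apply: mulrn_gcd_eq0; first exact: iter_phi_char.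
by rewrite -iter_phiMn // iter_phi_char // iter_phi0.
Qed.

Definition u0_dpgamma (n : nat) (x : M) : M :=
  if prime_power n then iter (logn (pdiv n) n) (phi (pdiv n)) x else 0.

Lemma u0_dpgamma_pfactor p k x : prime p -> u0_dpgamma (p ^ k) x = iter k (phi p) x.
Proof.
move=> pp; rewrite /u0_dpgamma prime_power_pfactor //.
by case: k => [|k]; rewrite ?pdiv_pfactor ?pfactorK.
Qed.

Lemma u0_dpgamma_prime p x : prime p -> u0_dpgamma p x = phi p x.
Proof. by move=> pp; rewrite -[p in LHS]expn1 u0_dpgamma_pfactor. Qed.

Lemma u0_dpgamma_non_prime_power n x : ~~ prime_power n -> u0_dpgamma n x = 0.
Proof. by rewrite /u0_dpgamma => /negbTE->. Qed.

Lemma u0_dpgamma1 x : u0_dpgamma 1 x = x.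
Proof. exact: (@u0_dpgamma_pfactor 2 0). Qed.

Lemma u0_dpgamma0 n : u0_dpgamma n 0 = 0.
Proof.
case: (boolP (prime_power n)) => [/prime_powerP[p [k [pp ->]]]|npp].
  by rewrite u0_dpgamma_pfactor ?iter_phi0.
exact: u0_dpgamma_non_prime_power.
Qed.

Lemma u0_dpgammaD n : {morph u0_dpgamma n : x y / x + y}.
Proof.
move=> x y; case: (boolP (prime_power n)) => [/prime_powerP[p [k [pp ->]]]|npp].
  by rewrite !u0_dpgamma_pfactor ?iter_phiD.
by rewrite !u0_dpgamma_non_prime_power ?addr0.
Qed.

Lemma u0_dpgammaZ n (r : R) x : u0_dpgamma n (r *: x) = r ^+ n *: u0_dpgamma n x.
Proof.
case: (boolP (prime_power n)) => [/prime_powerP[p [k [pp ->]]]|npp].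
  by rewrite !u0_dpgamma_pfactor ?iter_phiZ.
by rewrite !u0_dpgamma_non_prime_power ?scaler0.
Qed.

Lemma u0_dpgamma_bin n m x : (0 < m < n)%N -> u0_dpgamma n x *+ 'C(n, m) = 0.
Proof.
case/andP=> m0 mn; case: (boolP (prime_power n)) => [/prime_powerP[p [k [pp En]]]|npp].
  have k0 : (0 < k)%N by case: k En => // En; rewrite En ltnS leqNgt m0 in mn.
  rewrite En u0_dpgamma_pfactor // (@mulrn_eqmod _ _ p _ 0) ?iter_phi_char //.
  rewrite mod0n; apply/eqP; apply: dvdn_bin_pfactor (dvdnn _) _ => //.
  by rewrite m0 -En.
by rewrite u0_dpgamma_non_prime_power ?mul0rn.
Qed.

Lemma u0_dpgamma_mul m n x : (1 <= m)%N -> (1 <= n)%N ->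
  0 = u0_dpgamma (m + n) x *+ ((m + n)`! %/ (m`! * n`!)).
Proof.
move=> m1 n1; rewrite -bin_addn_factd u0_dpgamma_bin //.
by rewrite m1 /= -{1}[m]addn0 ltn_add2l.
Qed.

Lemma u0_dpgamma_comp m n x : (1 <= m)%N -> (1 <= n)%N ->
  u0_dpgamma m (u0_dpgamma n x)
    = u0_dpgamma (m * n) x *+ ((m * n)`! %/ (m`! * (n`! ^ m))).
Proof.
case: m => [|[|m]] // _; first by rewrite u0_dpgamma1 mul1n expn1 mul1n divnn fact_gt0.
case: n => [|[|n]] // _; first by rewrite u0_dpgamma1 muln1 exp1n muln1 divnn fact_gt0.
have dvd_mul d1 d2 : (d1 %| d1 * d2)%N /\ (d2 %| d1 * d2)%N.
  by rewrite dvdn_mulr ?dvdn_mull.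
case: (boolP (prime_power n.+2)) => [/prime_powerP[p [k [pp En]]]|npp]; last first.
  rewrite (u0_dpgamma_non_prime_power _ npp) u0_dpgamma0.
  rewrite u0_dpgamma_non_prime_power ?mul0rn //.
  by apply: contra npp; apply: prime_power_dvd (dvd_mul _ _).2.
case: (boolP (prime_power m.+2)) => [/prime_powerP[q [l [pq Em]]]|npp]; last first.
  rewrite (u0_dpgamma_non_prime_power _ npp) u0_dpgamma_non_prime_power ?mul0rn //.
  by apply: contra npp; apply: prime_power_dvd (dvd_mul _ _).1.
have k0 : (0 < k)%N by case: k En.
have l0 : (0 < l)%N by case: l Em.
rewrite Em En; have [<-|neq] := eqVneq q p.
  rewrite (@mulrn_eqmod _ _ q _ 1) ?comp_coef_pfactor_mod //.
    by rewrite mulr1n -expnD !u0_dpgamma_pfactor // iterD.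
  by rewrite -expnD u0_dpgamma_pfactor ?iter_phi_char ?addn_gt0 ?l0.
rewrite !u0_dpgamma_pfactor // iter_phi_mixed // u0_dpgamma_non_prime_power ?mul0rn //.
apply: contra neq => ppmn; apply/eqP/(prime_power_dvd_eq ppmn pq pp).
  exact: dvdn_trans (dvdn_exp l0 (dvdnn q)) (dvd_mul _ _).1.
exact: dvdn_trans (dvdn_exp k0 (dvdnn p)) (dvd_mul _ _).2.
Qed.

Definition u0_dpalg : dpalg R :=
  sqzero_dpalg u0_dpgamma1 (fun n x y _ => u0_dpgammaD n x y)
    (fun n r x _ => u0_dpgammaZ n r x) u0_dpgamma_mul u0_dpgamma_comp.

Lemma u0_dpalg_mul (x y : u0_dpalg) : dp_mul x y = 0.
Proof. by []. Qed.

Lemma u0_dpalg_gamma n (x : u0_dpalg) : dp_gamma u0_dpalg n x = u0_dpgamma n x.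
Proof. by []. Qed.

End U0DPAlgebra.

Lemma u0_lin_dpgamma (R : comPzRingType) (M N : u0mod R) (f : M -> N) n (x : M) :
  is_u0_lin f -> f (u0_dpgamma n x) = u0_dpgamma n (f x).
Proof.
case=> flin fphi; case: (boolP (prime_power n)) => [/prime_powerP[p [k [pp ->]]]|npp].
  by rewrite !u0_dpgamma_pfactor //; elim: k => //= k <-; rewrite fphi.
by rewrite !u0_dpgamma_non_prime_power // Rlin0.
Qed.

Section SquareZeroDPAlgebra.
Variables (R : comPzRingType) (D : dpalg R).
Hypothesis mul0 : forall a b : D, dp_mul a b = 0.
Local Notation gamma := (dp_gamma D).

Lemma sqzero_gammaD n a b : (0 < n)%N -> gamma n (a + b) = gamma n a + gamma n b.
Proof. by move=> n0; rewrite dp_gammaD // big1 ?addr0 // => i _; rewrite mul0. Qed.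

Lemma sqzero_gamma_bin n m a : (0 < m < n)%N -> gamma n a *+ 'C(n, m) = 0.
Proof.
case/andP=> m0 mn; have nm0 : (0 < n - m)%N by rewrite subn_gt0.
by rewrite -(subnKC (ltnW mn)) bin_addn_factd -dp_gamma_mul // mul0.
Qed.

Lemma sqzero_gamma_char n a : (1 < n)%N -> gamma n a *+ n = 0.
Proof. by move=> n1; rewrite -{2}(bin1 n) sqzero_gamma_bin. Qed.

Lemma sqzero_gamma_non_prime_power n a : (0 < n)%N -> ~~ prime_power n -> gamma n a = 0.
Proof.
move=> n0 npp; rewrite -[LHS]mulr1n -(gcd_bin_non_prime_power n0 npp).
apply: (big_ind (fun k => gamma n a *+ k = 0)) => //; first exact: mulrn_gcd_eq0.
by move=> i i0; rewrite sqzero_gamma_bin // i0 ltn_ord.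
Qed.

Lemma sqzero_gamma_mixed p q a : prime p -> prime q -> p != q -> gamma p (gamma q a) = 0.
Proof.
move=> pp pq neq; rewrite dp_gamma_comp ?prime_gt0 // sqzero_gamma_non_prime_power ?mul0rn //.
  by rewrite muln_gt0 !prime_gt0.
apply: contra neq => ppq; apply/eqP/(prime_power_dvd_eq ppq pp pq).
  exact: dvdn_mulr.
exact: dvdn_mull.
Qed.

Lemma sqzero_gamma_pfactorS p k a : prime p -> gamma (p ^ k.+1) a = gamma p (gamma (p ^ k) a).
Proof.
move=> pp; have pk0 : (0 < p ^ k)%N by rewrite expn_gt0 prime_gt0.
set y := gamma (p ^ k.+1) a; set c := ((p * p ^ k)`! %/ (p`! * (p ^ k)`! ^ p))%N.
have c1 : (c = 1 %[mod p])%N by exact: comp_coef_pfactor_mod.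
have Ecomp : gamma p (gamma (p ^ k) a) = y *+ c.
  by rewrite (dp_gamma_comp _ (prime_gt0 pp) pk0) -/c /y expnS.
(* y is killed by p ^ k.+1 and by c * p, with c prime to p. *)
have yp : y *+ p = 0.
  have yc : y *+ (c * p) = 0.
    by rewrite mulrnA -Ecomp sqzero_gamma_char ?prime_gt1.
  have ypk : y *+ (p ^ k.+1) = 0.
    by rewrite sqzero_gamma_char // -[1%N](expn0 p) ltn_exp2l ?prime_gt1.
  have cop : coprime (p ^ k) c.
    by rewrite coprimeXl // -coprime_modr c1 modn_small ?prime_gt1 // coprimen1.
  by have := mulrn_gcd_eq0 ypk yc; rewrite expnSr -muln_gcdl (eqP cop) mul1n.
by rewrite Ecomp (mulrn_eqmod yp c1).
Qed.

Definition sqzero_u0mod : u0mod R.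
Proof.
refine (@U0Mod R D gamma (fun p x y pp => sqzero_gammaD x y (prime_gt0 pp))
  (fun p r x pp => dp_gammaZ r x (prime_gt0 pp))
  (fun p x pp => sqzero_gamma_char x (prime_gt1 pp)) _).
move=> p q x pp pq; have [->|neq] := eqVneq p q; first by [].
by rewrite !sqzero_gamma_mixed // eq_sym.
Defined.

Lemma sqzero_dp_gammaE n (x : D) : (0 < n)%N -> gamma n x = u0_dpgamma (M := sqzero_u0mod) n x.
Proof.
move=> n0; case: (boolP (prime_power n)) => [/prime_powerP[p [k [pp ->]]]|npp].
  rewrite u0_dpgamma_pfactor //; elim: k => [|k IH]; first exact: dp_gamma1.
  by rewrite sqzero_gamma_pfactorS // IH.
by rewrite u0_dpgamma_non_prime_power // sqzero_gamma_non_prime_power.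
Qed.

End SquareZeroDPAlgebra.

Section SquareSpan.
Variables (R : comPzRingType) (A : dpalg R).

Lemma in_sq0 : in_sq (0 : A). Proof. by exists [::]; rewrite big_nil. Qed.

Lemma in_sqD (a b : A) : in_sq a -> in_sq b -> in_sq (a + b).
Proof. by move=> [s ->] [t ->]; exists (s ++ t); rewrite big_cat. Qed.

Lemma in_sqZ (r : R) (a : A) : in_sq a -> in_sq (r *: a).
Proof.
move=> [s ->]; exists [seq (r * x.1.1, x.1.2, x.2) | x <- s].
by rewrite big_map scaler_sumr; apply: eq_bigr => x _; rewrite scalerA.
Qed.

Lemma in_sq_mul (a b : A) : in_sq (dp_mul a b).
Proof. by exists [:: (1, a, b)]; rewrite big_seq1 scale1r. Qed.

Lemma in_sq_sum_mul (I : Type) (r : seq I) (F G : I -> A) :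
  in_sq (\sum_(i <- r) dp_mul (F i) (G i)).
Proof.
elim: r => [|i r IH]; rewrite ?big_nil ?big_cons; first exact: in_sq0.
exact/in_sqD/IH/in_sq_mul.
Qed.

Lemma in_sq_gamma n (a : A) : (1 < n)%N -> in_sq a -> in_sq (dp_gamma A n a).
Proof.
move=> n1 [s ->]; have n0 := ltnW n1; elim: s => [|x s IH].
  by rewrite big_nil dp_gamma0 //; apply: in_sq0.
rewrite big_cons dp_gammaD //; apply/in_sqD/IH/in_sqD/in_sq_sum_mul.
by rewrite dp_gammaZ // dp_gammaM //; apply/in_sqZ/in_sq_mul.
Qed.

(* A^2 need not be decidable; the quotient needs a boolean predicate. *)
Definition sq_pred : {pred A} :=
  fun a => if excluded_middle_informative (in_sq a) then true else false.

Lemma sq_predP a : reflect (in_sq a) (a \in sq_pred).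
Proof. by rewrite unfold_in /sq_pred; case: excluded_middle_informative; constructor. Qed.

Fact sq_pred_zmod_closed : zmod_closed sq_pred.
Proof.
split=> [|a b /sq_predP sa /sq_predP sb]; apply/sq_predP; first exact: in_sq0.
by apply: in_sqD => //; rewrite -scaleN1r; apply: in_sqZ.
Qed.

End SquareSpan.

HB.instance Definition _ R A :=
  GRing.isZmodClosed.Build _ (@sq_pred R A) (@sq_pred_zmod_closed R A).

Definition sq_zmod R (A : dpalg R) : zmodClosed A := GRing.ZmodClosed.clone A (@sq_pred R A) _.

Notation indec A := (Quotient.quot (sq_zmod A)).

Section Indecomposables.
Variables (R : comPzRingType) (A : dpalg R).
Local Open Scope quotient_scope.

Definition indec_pi (a : A) : indec A := \pi_(indec A) a.

Lemma indec_piD a b : indec_pi (a + b) = indec_pi a + indec_pi b.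
Proof. by rewrite /indec_pi !piE. Qed.

Lemma indec_pi0 : indec_pi 0 = 0.
Proof. by rewrite /indec_pi piE. Qed.

Lemma indec_piB a b : indec_pi (a - b) = indec_pi a - indec_pi b.
Proof. by rewrite /indec_pi !piE. Qed.

Lemma indec_pi_eq0 a : indec_pi a = 0 <-> in_sq a.
Proof.
rewrite -indec_pi0 /indec_pi; split=> [/eqP|sa]; last first.
  by apply/eqP; rewrite -Quotient.idealrBE subr0; apply/sq_predP.
by rewrite -Quotient.idealrBE subr0 => /sq_predP.
Qed.

Lemma indec_pi_eq a b : indec_pi a = indec_pi b <-> in_sq (a - b).
Proof.
rewrite -indec_pi_eq0 indec_piB.
by split=> [->|/eqP]; rewrite ?subrr // subr_eq0 => /eqP.
Qed.

Lemma indec_piK y : indec_pi (repr y) = y. Proof. exact: reprK. Qed.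

Definition indec_scale (r : R) (y : indec A) : indec A := indec_pi (r *: repr y).

Lemma indec_scaleE r a : indec_scale r (indec_pi a) = indec_pi (r *: a).
Proof.
apply/indec_pi_eq; rewrite -scalerBr; apply: in_sqZ; apply/indec_pi_eq.
exact: indec_piK.
Qed.

Lemma indec_scaleA r1 r2 y : indec_scale r1 (indec_scale r2 y) = indec_scale (r1 * r2) y.
Proof. by rewrite -[y]indec_piK !indec_scaleE scalerA. Qed.

Lemma indec_scale1 : left_id 1 indec_scale.
Proof. by move=> y; rewrite -[y]indec_piK indec_scaleE scale1r. Qed.

Lemma indec_scaleDr : right_distributive indec_scale +%R.
Proof.
by move=> r y z; rewrite -[y]indec_piK -[z]indec_piK -indec_piD !indec_scaleE scalerDr indec_piD.
Qed.

Lemma indec_scaleDl y : {morph indec_scale^~ y : r1 r2 / r1 + r2}.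
Proof. by move=> r1 r2; rewrite -[y]indec_piK !indec_scaleE scalerDl indec_piD. Qed.

End Indecomposables.

HB.instance Definition _ R (A : dpalg R) := GRing.Zmodule_isLmodule.Build R (indec A)
  (@indec_scaleA R A) (@indec_scale1 R A) (@indec_scaleDr R A) (@indec_scaleDl R A).

Section IndecDPAlgebra.
Variables (R : comPzRingType) (A : dpalg R).
Local Notation pi := (@indec_pi R A).
Local Notation gamma := (dp_gamma A).

Lemma indec_piZ r a : pi (r *: a) = r *: pi a.
Proof. by rewrite -indec_scaleE. Qed.

Lemma indec_piMn a n : pi (a *+ n) = pi a *+ n.
Proof. by elim: n => [|n IH]; rewrite ?mulr0n ?indec_pi0 // !mulrS indec_piD IH. Qed.

Lemma indec_pi_gammaD n a b : (0 < n)%N ->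
  pi (gamma n (a + b)) = pi (gamma n a) + pi (gamma n b).
Proof.
move=> n0; rewrite dp_gammaD // !indec_piD.
have /indec_pi_eq0-> := in_sq_sum_mul (index_iota 1 n) (gamma^~ a) (gamma^~ b \o subn n).
by rewrite addr0.
Qed.

Lemma indec_pi_gamma_eq n a b : (0 < n)%N -> pi a = pi b -> pi (gamma n a) = pi (gamma n b).
Proof.
case: n => [|[|n]] // _ Eab; first by rewrite !dp_gamma1.
have -> : b = a + (b - a) by rewrite addrC subrK.
rewrite indec_pi_gammaD //; have /indec_pi_eq0-> : in_sq (gamma n.+2 (b - a)).
  by apply: in_sq_gamma => //; apply/indec_pi_eq.
by rewrite addr0.
Qed.

Definition indec_gamma (n : nat) (y : indec A) : indec A := pi (gamma n (repr y)).

Lemma indec_gammaE n a : (0 < n)%N -> indec_gamma n (pi a) = pi (gamma n a).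
Proof. by move=> n0; apply: indec_pi_gamma_eq; rewrite ?indec_piK. Qed.

Lemma indec_gamma1 y : indec_gamma 1 y = y.
Proof. by rewrite /indec_gamma dp_gamma1 indec_piK. Qed.

Lemma indec_gammaD n y z : (0 < n)%N -> indec_gamma n (y + z) = indec_gamma n y + indec_gamma n z.
Proof.
move=> n0; rewrite -[y]indec_piK -[z]indec_piK -indec_piD.
by rewrite !indec_gammaE // indec_pi_gammaD.
Qed.

Lemma indec_gammaZ n r y : (0 < n)%N -> indec_gamma n (r *: y) = r ^+ n *: indec_gamma n y.
Proof.
by move=> n0; rewrite -[y]indec_piK -indec_piZ !indec_gammaE // dp_gammaZ // indec_piZ.
Qed.

Lemma indec_gamma_mul m n y : (0 < m)%N -> (0 < n)%N ->
  0 = indec_gamma (m + n) y *+ ((m + n)`! %/ (m`! * n`!)).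
Proof.
move=> m0 n0; rewrite -[y]indec_piK indec_gammaE ?addn_gt0 ?m0 // -indec_piMn.
by rewrite -dp_gamma_mul //; apply/esym/indec_pi_eq0/in_sq_mul.
Qed.

Lemma indec_gamma_comp m n y : (0 < m)%N -> (0 < n)%N ->
  indec_gamma m (indec_gamma n y)
    = indec_gamma (m * n) y *+ ((m * n)`! %/ (m`! * n`! ^ m)).
Proof.
move=> m0 n0; rewrite -[y]indec_piK !indec_gammaE ?muln_gt0 ?m0 //.
by rewrite -indec_piMn -dp_gamma_comp.
Qed.

Definition indec_dpalg : dpalg R :=
  sqzero_dpalg indec_gamma1 indec_gammaD indec_gammaZ indec_gamma_mul indec_gamma_comp.

Lemma indec_dpalg_mul (y z : indec_dpalg) : dp_mul y z = 0.
Proof. by []. Qed.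

Lemma indec_pi_dp_morph : is_dp_morph (pi : A -> indec_dpalg).
Proof.
split; first by split=> [a b|r a]; rewrite ?indec_piD ?indec_piZ.
split=> [a b|n a n0]; first exact/indec_pi_eq0/in_sq_mul.
by rewrite /= indec_gammaE.
Qed.

End IndecDPAlgebra.

Section Morphisms.
Variable R : comPzRingType.

Lemma is_dp_morph_comp (A B C : dpalg R) (f : A -> B) (g : B -> C) :
  is_dp_morph f -> is_dp_morph g -> is_dp_morph (g \o f).
Proof.
move=> [[fD fZ] [fM fG]] [[gD gZ] [gM gG]].
split; first by split=> [x y|r x] /=; rewrite ?fD ?gD ?fZ ?gZ.
by split=> [x y|n x n0] /=; rewrite ?fM ?gM ?fG ?gG.
Qed.

Lemma is_u0_lin_comp (M N P : u0mod R) (f : M -> N) (g : N -> P) :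
  is_u0_lin f -> is_u0_lin g -> is_u0_lin (g \o f).
Proof.
move=> [[fD fZ] fphi] [[gD gZ] gphi].
split; first by split=> [x y|r x] /=; rewrite ?fD ?gD ?fZ ?gZ.
by move=> p x pp /=; rewrite fphi ?gphi.
Qed.

Lemma dp_morph_in_sq (A B : dpalg R) (h : A -> B) (a : A) :
  (forall x y : B, dp_mul x y = 0) -> is_dp_morph h -> in_sq a -> h a = 0.
Proof.
move=> mul0 [[hD hZ] [hM _]] [s ->]; elim: s => [|x s IH].
  by rewrite big_nil; apply: Rlin0.
by rewrite big_cons hD IH hZ hM mul0 scaler0 addr0.
Qed.

Lemma u0_lin_dp_morph (M : u0mod R) (D : dpalg R) (mul0 : forall a b : D, dp_mul a b = 0)
    (f : M -> D) :
  is_u0_lin (N := sqzero_u0mod mul0) f -> is_dp_morph (A := u0_dpalg M) f.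
Proof.
move=> flin; split; first exact: flin.1.
split=> [x y|n x n0]; first by rewrite mul0; apply: Rlin0 flin.1.
by rewrite u0_dpalg_gamma (u0_lin_dpgamma _ _ flin) -sqzero_dp_gammaE.
Qed.

Lemma dp_morph_indec_factor (A : dpalg R) (M : u0mod R) (h : A -> u0_dpalg M) :
  is_dp_morph h -> exists2 f : sqzero_u0mod (@indec_dpalg_mul R A) -> M,
    is_u0_lin f & forall a, f (indec_pi a) = h a.
Proof.
move=> hmor; have [[hD hZ] [_ hG]] := hmor.
have fpi a : h (repr (indec_pi a)) = h a.
  apply/eqP; rewrite -subr_eq0 -(RlinB _ _ hmor.1).
  by apply/eqP/(dp_morph_in_sq _ hmor)/indec_pi_eq/indec_piK.
exists (fun y => h (repr y)) => //.
split; first split.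
- by move=> y z; rewrite -[y]indec_piK -[z]indec_piK -indec_piD !fpi hD.
- by move=> r y; rewrite -[y]indec_piK -indec_piZ !fpi hZ.
move=> p y pp; rewrite -[y]indec_piK /= indec_gammaE ?prime_gt0 // !fpi hG ?prime_gt0 //.
by rewrite u0_dpalg_gamma u0_dpgamma_prime.
Qed.

End Morphisms.

Unset Implicit Arguments.
Set Strict Implicit.

Theorem mainTheorem10 (R : comPzRingType) (V : lmodType R)
    (A : dpalg R) (i : V -> A) (M : u0mod R) (j : V -> M) :
  is_free_dp i -> is_u0_tensor j ->
  exists f : A -> M,
    [/\ is_Rlin f,
        (forall m : M, exists a : A, f a = m),
        (forall a : A, f a = 0 <-> in_sq a)
      & (forall (p : nat) (a : A), prime p -> f (dp_gamma A p a) = u0_phi M p (f a))].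
Proof.
move=> [iL freeA] [jL univM].
have [[h [hmor hi]] _] := freeA (u0_dpalg M) j jL.
have [f fL fh] := dp_morph_indec_factor hmor.
pose QU := sqzero_u0mod (@indec_dpalg_mul R A).
have piL : @is_Rlin R V QU (fun v => indec_pi (i v)).
  by split=> [x y|r x] /=; rewrite ?iL.1 ?iL.2 ?indec_piD ?indec_piZ.
have [[k [kL kj]] _] := univM QU _ piL.
have kh a : k (h a) = indec_pi a.
  apply: ((freeA (indec_dpalg A) _ piL).2 (k \o h)) => //=; last by move=> v; rewrite hi kj.
  - exact/is_dp_morph_comp/(u0_lin_dp_morph kL).
  - exact: indec_pi_dp_morph.
have fk m : f (k m) = m.
  apply: ((univM _ _ jL).2 (f \o k) id) => //=; last by move=> v; rewrite kj fh hi.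
  - exact: is_u0_lin_comp kL fL.
exists h; split; first exact: hmor.1.
- by move=> m; exists (repr (k m)); rewrite -fh indec_piK fk.
- move=> a; split=> [ha0|]; last exact: dp_morph_in_sq (@u0_dpalg_mul _ M) hmor.
  by apply/indec_pi_eq0; rewrite -kh ha0 (Rlin0 kL.1).
- by move=> p a pp; rewrite hmor.2.2 ?prime_gt0 // u0_dpalg_gamma u0_dpgamma_prime.
Qed.
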